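(* Assume $\langle f\rangle_X=0$ and that $\psi$ satisfies (A1) and (A2); let $u^H$ be the solution of the HQC problem, $u^{H,c}$ its reconstruction, and $\hat u^{H,c}(X_i)=u^H(X_i)+\epsilon\chi(X_i,X_i/\epsilon)Du^H(X_i)$. Then there exist constants $C_{13},C_{14}$, depending only on $c_\psi,C_\psi,C'_\psi$ and $p$ (independent of $\epsilon$, $H$, $f$), such that \[ |\hat u^{H,c}-u^{H,c}|_{H^1}\le C_{13}H|f|_{H^{-1}},\qquad \|\hat u^{H,c}-u^{H,c}\|_{L^2}\le C_{14}\,\epsilon H|f|_{H^{-1}}. \]
   Context: Let $\epsilon>0$, $N,p$ positive integers with $N/p\in\mathbb N$ and normalization $N\epsilon=1$; $X_i=\epsilon i$, $Y_j=j$. $U^N_{\rm per}(\epsilon\mathbb Z)$: functions $u:\epsilon\mathbb Z\to\mathbb R$ with $u(X_{i+N})=u(X_i)$; $U^N_\#(\epsilon\mathbb Z)$: those with $\langle u\rangle_X:=\frac1N\sum_{i=1}^Nu(X_i)=0$. $\langle u,v\rangle_X=\frac1N\sum_{i=1}^Nu(X_i)v(X_i)$, $Du(X_i)=(u(X_{i+1})-u(X_i))/\epsilon$, $\|u\|_{L^2}=\langle u,u\rangle_X^{1/2}$, $|u|_{H^1}=\|Du\|_{L^2}$, $|u|_{H^{-1}}=\sup\{\langle u,w\rangle_X/|w|_{H^1}:0\ne w\in U^N_\#(\epsilon\mathbb Z)\}$. $U^p_\#(\epsilon\mathbb Z)$: $p$-periodic functions on $\epsilon\mathbb Z$ with $\sum_{i=1}^pw(X_i)=0$.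 Two-scale functions $g:\epsilon\mathbb Z\times\mathbb Z\to\mathbb R$ satisfy $g(X_{i+N},Y_j)=g(X_i,Y_j)=g(X_i,Y_{j+p})$; $D_Xg(X_i,Y_j)=(g(X_{i+1},Y_j)-g(X_i,Y_j))/\epsilon$, $D_Yg(X_i,Y_j)=g(X_i,Y_{j+1})-g(X_i,Y_j)$, $\|g\|_{L^\infty(N,p)}=\max_{1\le i\le N,1\le j\le p}|g|$. $\psi$ is a two-scale function with (A1) $0<c_\psi\le\psi\le C_\psi$ and (A2) $\|D_X\psi\|_{L^\infty(N,p)}\le C'_\psi$. Cell solution $\chi$: two-scale with $\frac1p\sum_{j=1}^p\chi(X_i,Y_j)=0$ and $-D_Y(\psi D_Y\chi)=D_Y\psi$ everywhere. $f\in U^N_{\rm per}(\epsilon\mathbb Z)$. HQC method: indices $1=i_1<\dots<i_K\le N$, $i_{K+1}=N+1$, $S_k=\{X_i:i_k\le i<i_{k+1}\}$, $H_k=\epsilon(i_{k+1}-i_k)$, $H=\max_kH_k$. $U^H_{\rm per}$: $v\in U^N_{\rm per}(\epsilon\mathbb Z)$ affine on each $\{X_i:i_k\le i\le i_{k+1}\}$; $U^H_\#=U^H_{\rm per}\cap U^N_\#(\epsilon\mathbb Z)$. Sampling domains $S_k^{\rm rep}=\{X_i:i_k^{\rm rep}\le i<i_k^{\rm rep}+p\}\subset S_k$, collocation indices with $X_{i_k^{\rm coll}}\in S_k^{\rm rep}$, $\psi^\epsilon_{{\rm coll},k}(X_i)=\psi(X_{i_k^{\rm coll}},X_i/\epsilon)$,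 $\langle a,b\rangle_{S_k^{\rm rep}}=\frac1p\sum_{X_i\in S_k^{\rm rep}}a(X_i)b(X_i)$. For $v^H\in U^H_{\rm per}$ let $\ell_k$ be the affine function on $\epsilon\mathbb Z$ equal to $v^H$ on $S_k$; $\mathcal R_k(v^H)=\ell_k+w_k$ with $w_k\in U^p_\#(\epsilon\mathbb Z)$ such that $\langle\psi^\epsilon_{{\rm coll},k}D(\ell_k+w_k),Ds\rangle_{S_k^{\rm rep}}=0$ for all $s\in U^p_\#(\epsilon\mathbb Z)$. HQC problem: $u^H\in U^H_\#$ with $\sum_{k=1}^KH_k\langle\psi^\epsilon_{{\rm coll},k}D\mathcal R_k(u^H),D\mathcal R_k(v^H)\rangle_{S_k^{\rm rep}}=\langle f,v^H\rangle_X$ for all $v^H\in U^H_\#$. Reconstruction: $u^{H,c}(X_i)=u^H(X_i)+w_k(X_i)$ for $X_i\in S_k$, with $w_k=\mathcal R_k(u^H)-\ell_k$ computed for $u^H$. *)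

From HB Require Import structures.
From mathcomp Require Import all_boot all_order all_algebra.
From mathcomp Require Import boolp classical_sets reals.
Set Implicit Arguments. Unset Strict Implicit. Unset Printing Implicit Defensive.
Import Order.TTheory GRing.Theory Num.Theory.
Local Open Scope ring_scope.

Section Defs.
Variable R : realType.

(* Grid functions on eps*Z are represented by their values at indices:
   u : int -> R with u i = u(X_i), X_i = eps*i.
   Two-scale functions g : int -> int -> R with g i j = g(X_i, Y_j). *)

Definition periodic (n : nat) (u : int -> R) : Prop :=
  forall i : int, u (i + n%:Z) = u i.

Definition ip (n : nat) (a b : int -> R) : R :=
  n%:R^-1 * \sum_(1 <= i < n.+1) a i%:Z * b i%:Z.

Definition mean (n : nat) (u : int -> R) : R := ip n u (fun _ => 1).

Definition Uper (n : nat) (u : int -> R) : Prop := periodic n u.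
Definition Usharp (n : nat) (u : int -> R) : Prop :=
  periodic n u /\ \sum_(1 <= i < n.+1) u i%:Z = 0.

Definition Dop (eps : R) (u : int -> R) : int -> R :=
  fun i => (u (i + 1) - u i) / eps.

Definition L2 (N : nat) (u : int -> R) : R := Num.sqrt (ip N u u).
Definition H1 (N : nat) (eps : R) (u : int -> R) : R := L2 N (Dop eps u).

Definition Hm1 (N : nat) (eps : R) (f : int -> R) : R :=
  sup [set r | exists w : int -> R,
         [/\ Usharp N w, w <> (fun _ => 0) & r = ip N f w / H1 N eps w]].

Definition DX (eps : R) (g : int -> int -> R) : int -> int -> R :=
  fun i j => (g (i + 1) j - g i j) / eps.
Definition DY (g : int -> int -> R) : int -> int -> R :=
  fun i j => g i (j + 1) - g i j.

Definition two_scale (N p : nat) (g : int -> int -> R) : Prop :=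
  forall i j : int, g (i + N%:Z) j = g i j /\ g i (j + p%:Z) = g i j.

Definition cell_solution (N p : nat) (psi chi : int -> int -> R) : Prop :=
  [/\ two_scale N p chi,
      (forall i : int, p%:R^-1 * \sum_(1 <= j < p.+1) chi i j%:Z = 0) &
      (forall i j : int,
          - DY (fun a b => psi a b * DY chi a b) i j = DY psi i j)].

(* ---------------- HQC mesh data ----------------
   idx k = i_{k+1} (0-based k), k = 0..K ; irep k = i^rep_{k+1},
   icoll k = i^coll_{k+1}. *)
Definition Hk (eps : R) (idx : nat -> int) (k : nat) : R :=
  eps * (idx k.+1 - idx k)%:~R.

Definition Hmax (eps : R) (idx : nat -> int) (K : nat) : R :=
  \big[Num.max/0]_(k < K) Hk eps idx k.

Definition UHper (N : nat) (eps : R) (idx : nat -> int) (K : nat)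
  (v : int -> R) : Prop :=
  periodic N v /\
  forall k, (k < K)%N -> exists a b : R, forall i : int,
      idx k <= i <= idx k.+1 -> v i = a + b * (eps * i%:~R).
Definition UHsharp N eps idx K (v : int -> R) : Prop :=
  UHper N eps idx K v /\ Usharp N v.

Definition ell (idx : nat -> int) (k : nat) (v : int -> R) : int -> R :=
  fun i => v (idx k) + (i - idx k)%:~R *
             ((v (idx k.+1) - v (idx k)) / (idx k.+1 - idx k)%:~R).

Definition ip_rep (p : nat) (irep : nat -> int) (k : nat) (a b : int -> R) : R :=
  p%:R^-1 * \sum_(0 <= m < p) a (irep k + m%:Z) * b (irep k + m%:Z).

(* psi^eps_{coll,k}(X_i) = psi(X_{i_k^coll}, X_i/eps) = psi(icoll k, i) *)
Definition psi_coll (psi : int -> int -> R) (icoll : nat -> int) (k : nat) :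
  int -> R := fun i => psi (icoll k) i.

(* the defining conditions of w_k in R_k(v^H) = l_k + w_k *)
Definition cell_corr (p : nat) (eps : R) (psi : int -> int -> R)
  (irep icoll : nat -> int) (idx : nat -> int) (k : nat) (v w : int -> R) :
  Prop :=
  Usharp p w /\
  forall s : int -> R, Usharp p s ->
    ip_rep p irep k
      (fun i => psi_coll psi icoll k i *
                  Dop eps (fun j => ell idx k v j + w j) i)
      (Dop eps s) = 0.

Definition wcorr p eps psi irep icoll idx k (v : int -> R) : int -> R :=
  xget (fun _ => 0) [set w | cell_corr p eps psi irep icoll idx k v w].

Definition Rk p eps psi irep icoll idx k (v : int -> R) : int -> R :=
  fun i => ell idx k v i + wcorr p eps psi irep icoll idx k v i.

Definition BHQC p eps psi irep icoll idx (K : nat) (u v : int -> R) : R :=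
  \sum_(k < K) Hk eps idx k *
    ip_rep p irep k
      (fun i => psi_coll psi icoll k i *
                  Dop eps (Rk p eps psi irep icoll idx k u) i)
      (Dop eps (Rk p eps psi irep icoll idx k v)).

Definition HQC_solution N p eps psi irep icoll idx K (f uH : int -> R) : Prop :=
  UHsharp N eps idx K uH /\
  forall vH, UHsharp N eps idx K vH ->
    BHQC p eps psi irep icoll idx K uH vH = ip N f vH.

Definition reconstruction N p eps psi irep icoll idx K (uH uHc : int -> R) :
  Prop :=
  periodic N uHc /\
  forall k, (k < K)%N -> forall i : int, idx k <= i < idx k.+1 ->
    uHc i = uH i + wcorr p eps psi irep icoll idx k uH i.

Definition uhat (eps : R) (chi : int -> int -> R) (uH : int -> R) : int -> R :=
  fun i => uH i + eps * chi i i * Dop eps uH i.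

Definition HQC_mesh (N p : nat) (idx irep icoll : nat -> int) (K : nat) : Prop :=
  [/\ (0 < K)%N, idx 0%N = 1, idx K = (N.+1)%:Z,
      (forall k, (k < K)%N -> idx k < idx k.+1) &
      forall k, (k < K)%N ->
        (idx k <= irep k /\ irep k + p%:Z <= idx k.+1) /\
        (irep k <= icoll k < irep k + p%:Z)].


End Defs.

From HB Require Import structures.
From mathcomp Require Import all_boot all_order all_algebra.
From mathcomp Require Import boolp classical_sets reals.
From mathcomp Require Import ring lra zify.
Import Order.TTheory GRing.Theory Num.Theory.
Set Implicit Arguments. Unset Strict Implicit. Unset Printing Implicit Defensive.
Local Open Scope ring_scope.

(* The cell equation says that the flux A(x) = psi (1 + D_Y chi) does not depend on
   the fast variable; summing D_Y chi over a period shows that A(x) is the harmonic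
   mean of psi(x, .), hence lies in [c_psi, C_psi] and, by (A2), moves by O(eps C'_psi)
   per step in x.  Therefore D_Y chi = A / psi - 1 moves by O(eps) per step, and so
   does chi, being p-periodic with zero mean in the fast variable.
   The local cell problem on S_k is solved by w_k = eps s_k chi(X_{i_k^coll}, .), s_k
   the slope of u^H on S_k, so the error is eps s_k (chi(X_i, .) - chi(X_{i_k^coll}, .)),
   pointwise O(eps H |D u^H|).  Finally the HQC energy of u^H is sum_k H_k A s_k^2,
   at least c_psi |u^H|_{H^1}^2, which gives |u^H|_{H^1} <= |f|_{H^{-1}} / c_psi. *)

Section IntegerSteps.
Variable T : Type.

Lemma step_invariant_const (F : int -> T) :
  (forall a, F (a + 1) = F a) -> forall a b, F a = F b.
Proof.
move=> HF.
have Fn n a : F (a + n%:Z) = F a.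
  by elim: n => [|n IH]; rewrite ?addr0 // -addn1 PoszD addrA HF IH.
have Fle a b : a <= b -> F a = F b.
  by move=> ab; rewrite -(subrKC a b) -[b - a]gez0_abs ?subr_ge0 // Fn.
by move=> a b; case: (lerP a b) => [/Fle | /ltW /Fle] ->.
Qed.

Lemma periodicMz (h : int -> T) (p : int) :
  (forall j, h (j + p) = h j) -> forall j k, h (j + k * p) = h j.
Proof.
move=> hp j k.
have := @step_invariant_const (fun k => h (j + k * p)) _ k 0.
rewrite mul0r addr0; apply=> a.
by rewrite mulrDl mul1r addrA hp.
Qed.

Lemma periodic_repr (h : int -> T) (p : nat) : (0 < p)%N ->
  (forall j, h (j + p%:Z) = h j) ->
  forall a j, exists2 m : nat, (m < p)%N & h j = h (a + m%:Z).
Proof.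
move=> p_gt0 hp a j.
have p0 : p%:Z != 0 by rewrite eqz_nat -lt0n.
exists `|((j - a) %% p%:Z)%Z|%N.
  by rewrite -ltz_nat gez0_abs ?modz_ge0 ?ltz_pmod ?ltz_nat.
rewrite gez0_abs ?modz_ge0 // {1}(_ : j = a + ((j - a) %% p%:Z)%Z + ((j - a) %/ p%:Z)%Z * p%:Z).
  by rewrite periodicMz.
by have := divz_eq (j - a) p%:Z; lia.
Qed.

End IntegerSteps.

Section IntegerStepsNum.
Variable R : numDomainType.

Lemma telescope_int (g : int -> R) (a : int) (n : nat) :
  \sum_(0 <= m < n) (g (a + m%:Z + 1) - g (a + m%:Z)) = g (a + n%:Z) - g a.
Proof.
rewrite -[g a](congr1 g (addr0 a)) -(telescope_sumr (fun m => g (a + m%:Z)) (leq0n n)).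
by apply: eq_bigr => m _; rewrite -addn1 PoszD addrA.
Qed.

Lemma ler_dist_steps (h : int -> R) (M : R) (a b : int) : a <= b ->
  (forall j, a <= j < b -> `|h (j + 1) - h j| <= M) ->
  `|h b - h a| <= (b - a)%:~R * M.
Proof.
move=> ab; have [n ->] : exists n : nat, b = a + n%:Z.
  by exists `|b - a|%N; rewrite gez0_abs ?subr_ge0 // subrKC.
rewrite addrAC subrr add0r.
elim: n => [|n IH] hM; first by rewrite addr0 subrr normr0 mul0r.
rewrite -addn1 PoszD addrA (_ : h (a + n%:Z + 1) - h a =
  (h (a + n%:Z + 1) - h (a + n%:Z)) + (h (a + n%:Z) - h a)); last by rewrite addrA subrK.
apply: le_trans (ler_normD _ _) _.
rewrite intrD mulrDl mul1r addrC lerD //; first by apply: IH => j hj; apply: hM; lia.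
by apply: hM; lia.
Qed.

End IntegerStepsNum.

Section PeriodicBound.
Variable R : numDomainType.

Lemma sum_nat_shift1 (F : int -> R) n :
  \sum_(1 <= j < n.+1) F j%:Z = \sum_(0 <= m < n) F (1 + m%:Z).
Proof. by rewrite big_add1 /=; apply: eq_bigr => m _; rewrite -addn1 PoszD addrC. Qed.

Lemma periodic_sum0_norm_le (v : int -> R) (p : nat) (M : R) : (0 < p)%N ->
  (forall j, v (j + p%:Z) = v j) -> \sum_(0 <= m < p) v (1 + m%:Z) = 0 ->
  (forall j, `|v (j + 1) - v j| <= M) -> forall j, `|v j| <= p%:R * M.
Proof.
move=> p_gt0 vp v_sum0 vM j.
have [m0 m0p ->] := periodic_repr p_gt0 vp 1 j.
have dist_le a b : (a < p)%N -> (b < p)%N -> `|v (1 + a%:Z) - v (1 + b%:Z)| <= p%:R * M.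
  have M_ge0 : 0 <= M by apply: le_trans (vM 0).
  wlog ba : a b / (b <= a)%N => [hwlog ap bp|ap bp].
    by case: (leqP b a) => [|/ltnW] /hwlog; [apply | rewrite distrC; apply].
  apply: le_trans (ler_dist_steps (M := M) _ (fun j _ => vM j)) _; first lia.
  by rewrite ler_wpM2r // -[p%:R]/(p%:Z%:~R) ler_int; lia.
have hp : (0 : R) < p%:R by rewrite ltr0n.
rewrite -(ler_pM2l hp) -[X in X * _](ger0_norm (ltW hp)) -normrM.
have -> : p%:R * v (1 + m0%:Z) = \sum_(0 <= m < p) (v (1 + m0%:Z) - v (1 + m%:Z)).
  by rewrite sumrB v_sum0 subr0 sumr_const_nat subn0 mulr_natl.
apply: le_trans (ler_norm_sum _ _ _) _.
have -> : p%:R * (p%:R * M) = \sum_(0 <= m < p) (p%:R * M).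
  by rewrite sumr_const_nat subn0 mulr_natl.
by apply: ler_sum_nat => m /andP [_ mp]; apply: dist_le.
Qed.

End PeriodicBound.

Section CellSolution.
Variable R : realType.

(* The homogenized coefficient A(x): the flux psi (1 + D_Y chi), which the cell
   equation makes independent of the fast variable (see [cell_flux_const]). *)
Definition cell_flux (psi chi : int -> int -> R) (x : int) : R :=
  psi x 0 * (1 + DY chi x 0).

Definition inv_psi_sum (p : nat) (psi : int -> int -> R) (x : int) : R :=
  \sum_(0 <= m < p) (psi x (1 + m%:Z))^-1.

Variables (N p : nat) (psi chi : int -> int -> R) (c C : R).
Hypothesis hcell : cell_solution N p psi chi.
Hypothesis hpsi : forall i j, c <= psi i j <= C.
Hypothesis c_gt0 : 0 < c.
Hypothesis p_gt0 : (0 < p)%N.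

Lemma psi_gt0 i j : 0 < psi i j.
Proof. by case/andP: (hpsi i j) => + _; apply: lt_le_trans. Qed.

Lemma C_gt0 : 0 < C.
Proof. by case/andP: (hpsi 0 0) => h1 h2; apply: lt_le_trans c_gt0 (le_trans h1 h2). Qed.

Lemma chi_periodic x j : chi x (j + p%:Z) = chi x j.
Proof. by case: hcell => /(_ x j) []. Qed.

Lemma sum_chi_cell x : \sum_(1 <= j < p.+1) chi x j%:Z = 0.
Proof.
case: hcell => _ /(_ x) /eqP; rewrite mulf_eq0 invr_eq0 pnatr_eq0.
by rewrite (negbTE (lt0n_neq0 p_gt0)) => /eqP.
Qed.

Lemma cell_flux_const x j : psi x j * (1 + DY chi x j) = cell_flux psi chi x.
Proof.
apply: (step_invariant_const (F := fun j => psi x j * (1 + DY chi x j))) => a.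
by case: hcell => _ _ /(_ x a); rewrite /DY /=; lra.
Qed.

Lemma DY_cell x j : DY chi x j = cell_flux psi chi x / psi x j - 1.
Proof.
rewrite -(cell_flux_const x j) [psi x j * _]mulrC mulfK ?gt_eqF ?psi_gt0 //.
by rewrite addrC addKr.
Qed.

Lemma sum_DY_cell x : \sum_(0 <= m < p) DY chi x (1 + m%:Z) = 0.
Proof. by rewrite telescope_int chi_periodic subrr. Qed.

Lemma cell_flux_harmonic x : cell_flux psi chi x * inv_psi_sum p psi x = p%:R.
Proof.
have := sum_DY_cell x.
under eq_bigr do rewrite DY_cell.
by rewrite sumrB sumr_const_nat subn0 -mulr_sumr => /eqP; rewrite subr_eq0 => /eqP.
Qed.

Lemma inv_psi_sum_bounds x : p%:R / C <= inv_psi_sum p psi x <= p%:R / c.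
Proof.
have sum_const (a : R) : \sum_(0 <= m < p) a = p%:R * a.
  by rewrite sumr_const_nat subn0 mulr_natl.
rewrite /inv_psi_sum -!sum_const; apply/andP; split; apply: ler_sum => m _;
  rewrite lef_pV2 ?posrE ?psi_gt0 ?C_gt0 //; by case/andP: (hpsi x (1 + m%:Z)).
Qed.

Lemma cell_flux_bounds x : c <= cell_flux psi chi x <= C.
Proof.
have /andP [lb ub] := inv_psi_sum_bounds x.
have S_gt0 : 0 < inv_psi_sum p psi x.
  by apply: lt_le_trans lb; rewrite divr_gt0 ?ltr0n ?C_gt0.
have mul_div_p (a : R) : 0 < a -> a * (p%:R / a) = p%:R.
  by move=> a_gt0; rewrite mulrCA mulfV ?mulr1 ?gt_eqF.
apply/andP; split; rewrite -(ler_pM2r S_gt0) cell_flux_harmonic.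
  by rewrite -(mul_div_p c c_gt0) ler_pM2l.
by rewrite -(mul_div_p C C_gt0) ler_pM2l ?C_gt0.
Qed.

End CellSolution.

Section SlowVariable.
Variable R : realType.

(* Since D_Y chi = A / psi - 1, one step in x moves D_Y chi by at most
   eps C' times this constant: A moves by C^2 eps C' / c^2 and 1/psi by eps C' / c^2. *)
Definition cell_lip (c C : R) : R := C ^+ 2 / c ^+ 3 + C / c ^+ 2.

Variables (N p : nat) (eps : R) (psi chi : int -> int -> R) (c C C' : R).
Hypothesis hcell : cell_solution N p psi chi.
Hypothesis hpsi : forall i j, c <= psi i j <= C.
Hypothesis c_gt0 : 0 < c.
Hypothesis p_gt0 : (0 < p)%N.
Hypothesis N_gt0 : (0 < N)%N.
Hypothesis eps_gt0 : 0 < eps.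
Hypothesis psi_two_scale : two_scale N p psi.
Hypothesis hDX : forall i j : int, 1 <= i <= N%:Z -> 1 <= j <= p%:Z ->
  `|DX eps psi i j| <= C'.

Let delta := eps * C' / c ^+ 2.

Lemma C'_ge0 : 0 <= C'.
Proof.
by apply: le_trans (normr_ge0 _) (hDX (i := 1) (j := 1) _ _); clear -N_gt0 p_gt0; lia.
Qed.

Lemma cell_lip_ge0 : 0 <= cell_lip c C.
Proof.
have hC := C_gt0 hpsi c_gt0.
by rewrite /cell_lip addr_ge0 // divr_ge0 ?exprn_ge0 // ltW.
Qed.

Lemma psi_step x j : 1 <= x <= N%:Z -> `|psi (x + 1) j - psi x j| <= eps * C'.
Proof.
move=> hx.
have hp j' : psi (x + 1) (j' + p%:Z) - psi x (j' + p%:Z) = psi (x + 1) j' - psi x j'.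
  by case: (psi_two_scale (x + 1) j') => _ ->; case: (psi_two_scale x j') => _ ->.
have [m mp ->] := periodic_repr p_gt0 hp 1 j.
have := hDX hx (j := 1 + m%:Z) (ltac:(clear -mp; lia)).
by rewrite /DX normrM normfV (gtr0_norm eps_gt0) ler_pdivrMr // mulrC.
Qed.

Lemma inv_psi_step x j : 1 <= x <= N%:Z ->
  `|(psi (x + 1) j)^-1 - (psi x j)^-1| <= delta.
Proof.
move=> hx.
have ha := psi_gt0 hpsi c_gt0 (x + 1) j; have hb := psi_gt0 hpsi c_gt0 x j.
have hab : 0 < (psi (x + 1) j * psi x j)^-1 by rewrite invr_gt0 mulr_gt0.
have -> : (psi (x + 1) j)^-1 - (psi x j)^-1 =
    (psi x j - psi (x + 1) j) * (psi (x + 1) j * psi x j)^-1.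
  by field; rewrite !gt_eqF.
rewrite normrM distrC (gtr0_norm hab) /delta.
apply: ler_pM (normr_ge0 _) (ltW hab) (psi_step j hx) _.
rewrite expr2 lef_pV2 ?posrE ?mulr_gt0 //.
case/andP: (hpsi (x + 1) j) => h1 _; case/andP: (hpsi x j) => h2 _.
by apply: ler_pM => //; apply: ltW.
Qed.

Lemma inv_psi_sum_step x : 1 <= x <= N%:Z ->
  `|inv_psi_sum p psi (x + 1) - inv_psi_sum p psi x| <= p%:R * delta.
Proof.
move=> hx; rewrite /inv_psi_sum -sumrB.
apply: le_trans (ler_norm_sum _ _ _) _.
have -> : p%:R * delta = \sum_(0 <= m < p) delta.
  by rewrite sumr_const_nat subn0 mulr_natl.
by apply: ler_sum => m _; apply: inv_psi_step.
Qed.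

Lemma cell_flux_step x : 1 <= x <= N%:Z ->
  `|cell_flux psi chi (x + 1) - cell_flux psi chi x| <= C ^+ 2 * delta.
Proof.
move=> hx; have hp : (0 : R) < p%:R by rewrite ltr0n.
have flux_ge0 y : 0 <= cell_flux psi chi y.
  by case/andP: (cell_flux_bounds hcell hpsi c_gt0 p_gt0 y) => + _; apply/le_trans/ltW.
have flux_le y : cell_flux psi chi y <= C.
  by case/andP: (cell_flux_bounds hcell hpsi c_gt0 p_gt0 y).
have e : (cell_flux psi chi (x + 1) - cell_flux psi chi x) * p%:R =
    cell_flux psi chi x * cell_flux psi chi (x + 1) *
    (inv_psi_sum p psi x - inv_psi_sum p psi (x + 1)).
  by rewrite mulrBl -{1}(cell_flux_harmonic hcell hpsi c_gt0 x)
    -(cell_flux_harmonic hcell hpsi c_gt0 (x + 1)); ring.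
rewrite -(ler_pM2r hp) -{1}(ger0_norm (ltW hp)) -normrM e normrM distrC.
rewrite (ger0_norm (mulr_ge0 (flux_ge0 _) (flux_ge0 _))).
rewrite (_ : C ^+ 2 * delta * p%:R = (C * C) * (p%:R * delta)); last by ring.
apply: ler_pM; [exact: mulr_ge0 | exact: normr_ge0 | | exact: inv_psi_sum_step].
exact: ler_pM.
Qed.

Lemma DY_cell_step x j : 1 <= x <= N%:Z ->
  `|DY chi (x + 1) j - DY chi x j| <= eps * C' * cell_lip c C.
Proof.
move=> hx; rewrite !(DY_cell hcell hpsi c_gt0).
have ha := psi_gt0 hpsi c_gt0 (x + 1) j.
have /andP [A0l A0u] := cell_flux_bounds hcell hpsi c_gt0 p_gt0 x.
set A0 := cell_flux psi chi x; set A1 := cell_flux psi chi (x + 1).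
rewrite (_ : A1 / psi (x + 1) j - 1 - (A0 / psi x j - 1) =
  (A1 - A0) * (psi (x + 1) j)^-1 + A0 * ((psi (x + 1) j)^-1 - (psi x j)^-1)); last by ring.
rewrite (_ : eps * C' * cell_lip c C = C ^+ 2 * delta * c^-1 + C * delta); last first.
  by rewrite /delta /cell_lip; field; rewrite gt_eqF.
apply: le_trans (ler_normD _ _) _; apply: lerD; rewrite normrM.
  apply: ler_pM (normr_ge0 _) (normr_ge0 _) (cell_flux_step hx) _.
  rewrite gtr0_norm ?invr_gt0 // lef_pV2 ?posrE //.
  by case/andP: (hpsi (x + 1) j).
apply: ler_pM (normr_ge0 _) (normr_ge0 _) _ (inv_psi_step j hx).
have A0_ge0 : 0 <= A0 by apply: le_trans (ltW c_gt0) A0l.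
by rewrite ger0_norm.
Qed.

Lemma chi_step x j : 1 <= x <= N%:Z ->
  `|chi (x + 1) j - chi x j| <= p%:R * (eps * C' * cell_lip c C).
Proof.
move=> hx; apply: (periodic_sum0_norm_le (v := fun j => chi (x + 1) j - chi x j)) => //.
- by move=> j'; rewrite !(chi_periodic hcell).
- by rewrite sumrB -!sum_nat_shift1 !(sum_chi_cell hcell p_gt0) subrr.
- move=> j'; rewrite (_ : chi (x + 1) (j' + 1) - chi x (j' + 1) - (chi (x + 1) j' - chi x j')
    = DY chi (x + 1) j' - DY chi x j'); last by rewrite /DY; ring.
  exact: DY_cell_step.
Qed.

Lemma chi_lipschitz a b j : 1 <= a -> a <= b -> b <= N%:Z ->
  `|chi b j - chi a j| <= (b - a)%:~R * (p%:R * (eps * C' * cell_lip c C)).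
Proof.
move=> ha ab bN; apply: (ler_dist_steps (h := fun x => chi x j)) => // x hx.
by apply: chi_step; clear -ha hx bN; lia.
Qed.

End SlowVariable.

Section DiscreteDerivative.
Variable R : realType.
Implicit Types (eps : R) (u v : int -> R).

Lemma Dop_add eps u v i :
  Dop eps (fun j => u j + v j) i = Dop eps u i + Dop eps v i.
Proof. by rewrite /Dop -mulrDl; congr (_ * _); ring. Qed.

Lemma Dop_sub eps u v i :
  Dop eps (fun j => u j - v j) i = Dop eps u i - Dop eps v i.
Proof. by rewrite /Dop -mulrBl; congr (_ * _); ring. Qed.

Lemma Dop_periodic eps (N : nat) u : periodic N u -> periodic N (Dop eps u).
Proof. by move=> up i; rewrite /Dop [i + N%:Z + 1]addrAC !up. Qed.

Lemma periodic_sum0_Dop_eq0 eps (p : nat) (a : int) v :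
  eps != 0 -> (0 < p)%N -> Usharp p v ->
  (forall m, (m < p)%N -> Dop eps v (a + m%:Z) = 0) -> v = (fun _ => 0).
Proof.
move=> eps0 p_gt0 [vp v_sum0] Dv0.
have v_const m : (m <= p)%N -> v (a + m%:Z) = v a.
  elim: m => [|m IH] mp; first by rewrite addr0.
  move/eqP: (Dv0 m mp); rewrite mulf_eq0 invr_eq0 (negbTE eps0) orbF subr_eq0.
  by rewrite -addn1 PoszD addrA => /eqP ->; apply: IH; apply: ltnW.
have v_eq j : v j = v a.
  by have [m /ltnW mp ->] := periodic_repr p_gt0 vp a j; apply: v_const.
have va0 : v a = 0.
  move: v_sum0; under eq_bigr do rewrite v_eq.
  rewrite sumr_const_nat subSS subn0 => /eqP.
  by rewrite -mulr_natl mulf_eq0 pnatr_eq0 (negbTE (lt0n_neq0 p_gt0)) => /eqP.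
by apply: funext => j; rewrite v_eq.
Qed.

End DiscreteDerivative.

Section LocalCellProblem.
Variable R : realType.

Definition block_slope (eps : R) (idx : nat -> int) (k : nat) (v : int -> R) : R :=
  (v (idx k.+1) - v (idx k)) / (idx k.+1 - idx k)%:~R / eps.

Definition cell_corrector (eps : R) (chi : int -> int -> R) (icoll idx : nat -> int)
    (k : nat) (v : int -> R) : int -> R :=
  fun i => eps * block_slope eps idx k v * chi (icoll k) i.

Variables (N p : nat) (eps : R) (psi chi : int -> int -> R) (c C : R).
Variables (idx irep icoll : nat -> int) (k : nat) (v : int -> R).
Hypothesis hcell : cell_solution N p psi chi.
Hypothesis hpsi : forall i j, c <= psi i j <= C.
Hypothesis c_gt0 : 0 < c.
Hypothesis p_gt0 : (0 < p)%N.
Hypothesis eps_gt0 : 0 < eps.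

Let s := block_slope eps idx k v.
Let w0 := cell_corrector eps chi icoll idx k v.

Lemma Dop_ell i : Dop eps (ell idx k v) i = s.
Proof.
rewrite /Dop /ell /s /block_slope (_ : i + 1 - idx k = (i - idx k) + 1); last by ring.
by rewrite intrD; congr (_ / _); ring.
Qed.

Lemma Dop_ell_corrector i :
  Dop eps (fun j => ell idx k v j + w0 j) i = s * (1 + DY chi (icoll k) i).
Proof.
rewrite Dop_add Dop_ell /Dop /w0 /cell_corrector /DY -/s.
by field; rewrite gt_eqF.
Qed.

Lemma flux_ell_corrector i :
  psi (icoll k) i * Dop eps (fun j => ell idx k v j + w0 j) i =
  s * cell_flux psi chi (icoll k).
Proof.
by rewrite Dop_ell_corrector -(cell_flux_const hcell (icoll k) i) mulrCA.
Qed.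

Lemma cell_corr_corrector : cell_corr p eps psi irep icoll idx k v w0.
Proof.
split.
  split; first by move=> j; rewrite /w0 /cell_corrector (chi_periodic hcell).
  by rewrite /w0 /cell_corrector -mulr_sumr (sum_chi_cell hcell p_gt0) mulr0.
move=> t [tp _]; rewrite /ip_rep /psi_coll.
under eq_bigr do rewrite flux_ell_corrector /Dop mulrA mulrAC.
by rewrite -mulr_sumr telescope_int tp subrr !mulr0.
Qed.

Lemma cell_corr_unique w : cell_corr p eps psi irep icoll idx k v w -> w = w0.
Proof.
move=> [w_sharp w_orth]; have [w0_sharp w0_orth] := cell_corr_corrector.
pose d j := w j - w0 j.
have d_sharp : Usharp p d.
  split; first by move=> j; rewrite /d w_sharp.1 w0_sharp.1.
  by rewrite /d sumrB w_sharp.2 w0_sharp.2 subrr.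
have p_inv0 : (p%:R : R)^-1 != 0 by rewrite invr_eq0 pnatr_eq0 -lt0n.
have energy0 : \sum_(0 <= m < p)
    psi (icoll k) (irep k + m%:Z) * Dop eps d (irep k + m%:Z) ^+ 2 = 0.
  move: (w_orth d d_sharp) (w0_orth d d_sharp); rewrite /ip_rep /psi_coll.
  move=> /eqP; rewrite mulf_eq0 (negbTE p_inv0) /= => /eqP e1.
  move=> /eqP; rewrite mulf_eq0 (negbTE p_inv0) /= => /eqP e0.
  rewrite -[RHS](subrr (0 : R)) -[X in _ = X - _]e1 -[X in _ = _ - X]e0 -sumrB.
  apply: eq_bigr => m _.
  by rewrite /d Dop_sub !Dop_add; ring.
have Dd0 m : (m < p)%N -> Dop eps d (irep k + m%:Z) = 0.
  move=> mp; move: energy0; rewrite big_mkord => energy0.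
  have term_ge0 (i : 'I_p) : true ->
      0 <= psi (icoll k) (irep k + i%:Z) * Dop eps d (irep k + i%:Z) ^+ 2.
    by rewrite mulr_ge0 ?sqr_ge0 // ltW // (psi_gt0 hpsi c_gt0).
  move/eqP: (psumr_eq0P term_ge0 energy0 (i := Ordinal mp) isT).
  by rewrite mulf_eq0 (gt_eqF (psi_gt0 hpsi c_gt0 _ _)) sqrf_eq0 => /eqP.
have d0 := periodic_sum0_Dop_eq0 (lt0r_neq0 eps_gt0) p_gt0 d_sharp Dd0.
apply: funext => j; apply/eqP; rewrite -subr_eq0; apply/eqP.
exact: (congr1 (fun g => g j) d0).
Qed.

Lemma wcorr_corrector : wcorr p eps psi irep icoll idx k v = w0.
Proof. exact: xget_unique cell_corr_corrector cell_corr_unique. Qed.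

Lemma local_energy :
  ip_rep p irep k
    (fun i => psi_coll psi icoll k i * Dop eps (Rk p eps psi irep icoll idx k v) i)
    (Dop eps (Rk p eps psi irep icoll idx k v)) = s ^+ 2 * cell_flux psi chi (icoll k).
Proof.
rewrite /Rk wcorr_corrector /ip_rep /psi_coll -/w0.
rewrite (eq_bigr (fun m => s ^+ 2 * cell_flux psi chi (icoll k) *
  (1 + (chi (icoll k) (irep k + m%:Z + 1) - chi (icoll k) (irep k + m%:Z))))); last first.
  by move=> m _; rewrite flux_ell_corrector Dop_ell_corrector /DY; ring.
rewrite -mulr_sumr big_split /= telescope_int (chi_periodic hcell) subrr addr0.
by rewrite sumr_const_nat subn0 mulrCA mulVf ?mulr1 // pnatr_eq0 -lt0n.
Qed.

End LocalCellProblem.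

Section DualNorm.
Variable R : realType.

Lemma ler_sum_nat_term (F : nat -> R) (a b m : nat) :
  (forall i, (a <= i < b)%N -> 0 <= F i) -> (a <= m < b)%N ->
  F m <= \sum_(a <= i < b) F i.
Proof.
move=> F_ge0 mab; rewrite (bigD1_seq m) ?mem_index_iota ?iota_uniq //= lerDl.
by rewrite big_seq_cond sumr_ge0 // => i /andP [+ _]; rewrite mem_index_iota; apply: F_ge0.
Qed.

Lemma ip_ge0 (N : nat) (u : int -> R) : 0 <= ip N u u.
Proof.
by rewrite /ip mulr_ge0 ?invr_ge0 ?ler0n // sumr_ge0 // => i _; rewrite -expr2 sqr_ge0.
Qed.

Lemma H1_ge0 (N : nat) (eps : R) (u : int -> R) : 0 <= H1 N eps u.
Proof. exact: sqrtr_ge0. Qed.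

Lemma H1_sqr (N : nat) (eps : R) (u : int -> R) :
  H1 N eps u ^+ 2 = ip N (Dop eps u) (Dop eps u).
Proof. by rewrite /H1 /L2 sqr_sqrtr // ip_ge0. Qed.

Variables (N : nat) (eps : R) (f : int -> R).
Hypothesis N_gt0 : (0 < N)%N.
Hypothesis eps_gt0 : 0 < eps.
Hypothesis hNe : N%:R * eps = 1.
Hypothesis f_mean0 : mean N f = 0.

Lemma Dop_norm_le_H1 (w : int -> R) m : (1 <= m < N.+1)%N ->
  `|Dop eps w m%:Z| <= N%:R * H1 N eps w.
Proof.
move=> mN; have hN : (0 : R) < N%:R by rewrite ltr0n.
have sq_le : Dop eps w m%:Z ^+ 2 <= (N%:R * H1 N eps w) ^+ 2.
  apply: (@le_trans _ _ (N%:R * H1 N eps w ^+ 2)).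
    rewrite H1_sqr /ip mulrA mulfV ?gt_eqF // mul1r expr2.
    apply: (ler_sum_nat_term (F := fun i => Dop eps w i%:Z * Dop eps w i%:Z)) => // i _.
    by rewrite -expr2 sqr_ge0.
  rewrite exprMn ler_wpM2r ?sqr_ge0 // expr2 ler_peMl ?ler0n //.
  by rewrite ler1n.
by rewrite -ler_sqr ?nnegrE ?normr_ge0 ?mulr_ge0 ?ler0n ?H1_ge0 // real_normK ?num_real.
Qed.

(* Any finite bound would do here: it only makes the supremum in [Hm1] meaningful. *)
Lemma ip_le_l1_H1 (w : int -> R) :
  `|ip N f w| <= (\sum_(1 <= i < N.+1) `|f i%:Z|) * H1 N eps w.
Proof.
set Bf := \sum_(1 <= i < N.+1) `|f i%:Z|.
set T := \sum_(1 <= m < N.+1) `|w (m%:Z + 1) - w m%:Z|.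
have T_le : T <= N%:R * H1 N eps w.
  have -> : N%:R * H1 N eps w = \sum_(1 <= m < N.+1) (eps * (N%:R * H1 N eps w)).
    by rewrite sumr_const_nat subSS subn0 -[RHS]mulr_natl mulrA hNe mul1r.
  apply: ler_sum_nat => m hm.
  rewrite (_ : w (m%:Z + 1) - w m%:Z = eps * Dop eps w m%:Z); last first.
    by rewrite /Dop mulrCA mulfV ?mulr1 ?gt_eqF.
  by rewrite normrM (gtr0_norm eps_gt0) ler_wpM2l ?(ltW eps_gt0) ?Dop_norm_le_H1.
have osc_le i : (1 <= i < N.+1)%N -> `|w i%:Z - w 1| <= T.
  move=> /andP [i1 iN].
  rewrite -(telescope_sumr (fun m => w m%:Z) i1).
  under eq_bigr do rewrite -addn1 PoszD.
  apply: le_trans (ler_norm_sum _ _ _) _.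
  rewrite /T (@big_cat_nat _ _ _ i 1 N.+1 _ _ i1 (ltnW iN)) /= lerDl.
  by apply: sumr_ge0 => m _; apply: normr_ge0.
have ip_shift : ip N f w = N%:R^-1 * \sum_(1 <= i < N.+1) f i%:Z * (w i%:Z - w 1).
  move: f_mean0; rewrite /mean /ip => hm.
  have -> : \sum_(1 <= i < N.+1) f i%:Z * (w i%:Z - w 1) =
      \sum_(1 <= i < N.+1) f i%:Z * w i%:Z - w 1 * \sum_(1 <= i < N.+1) f i%:Z * 1.
    by rewrite mulr_sumr -sumrB; apply: eq_bigr => i _; ring.
  by rewrite mulrBr mulrCA hm mulr0 subr0.
have Bf_ge0 : 0 <= Bf by apply: sumr_ge0 => i _; apply: normr_ge0.
have Ninv_ge0 : 0 <= N%:R^-1 :> R by rewrite invr_ge0 ler0n.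
rewrite ip_shift normrM (ger0_norm Ninv_ge0).
apply: le_trans (_ : N%:R^-1 * (Bf * (N%:R * H1 N eps w)) <= _); last first.
  by rewrite mulrCA mulKf ?pnatr_eq0 -?lt0n.
rewrite ler_wpM2l //; apply: le_trans (ler_norm_sum _ _ _) _.
apply: le_trans (_ : Bf * T <= _); last by rewrite ler_wpM2l.
rewrite /Bf mulr_suml; apply: ler_sum_nat => i hi.
by rewrite normrM ler_wpM2l ?normr_ge0 ?osc_le.
Qed.

Let Eset : set R := [set r | exists w : int -> R,
  [/\ Usharp N w, w <> (fun _ => 0) & r = ip N f w / H1 N eps w]].

Lemma Hm1_set_ub : has_ubound Eset.
Proof.
exists (\sum_(1 <= i < N.+1) `|f i%:Z|) => r [w [_ _ ->]].
have [->|H1w0] := eqVneq (H1 N eps w) 0.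
  by rewrite invr0 mulr0 sumr_ge0 // => i _; apply: normr_ge0.
rewrite ler_pdivrMr ?lt_neqAle 1?eq_sym ?H1w0 ?H1_ge0 //.
exact: le_trans (ler_norm _) (ip_le_l1_H1 w).
Qed.

Lemma Hm1_ge0 : 0 <= Hm1 N eps f.
Proof.
rewrite /Hm1 -/Eset.
have [[w [w_sharp w_neq0]] | no_w] :=
  pselect (exists w : int -> R, Usharp N w /\ w <> (fun _ => 0)); last first.
  rewrite (_ : Eset = set0) ?sup0 //.
  by apply/seteqP; split => // r [w [? ? _]]; apply: no_w; exists w.
have Er : Eset (ip N f w / H1 N eps w) by exists w.
have Enr : Eset (- (ip N f w / H1 N eps w)).
  exists (fun i => - w i); split.
  - case: w_sharp => wp w_sum0; split; first by move=> j; rewrite wp.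
    by rewrite sumrN w_sum0 oppr0.
  - move=> /(congr1 (fun g => - g _)) /= wE; apply: w_neq0; apply: funext => i.
    by rewrite -[w i]opprK wE oppr0.
  - rewrite -mulNr; congr (_ / _); last first.
      rewrite /H1 /L2 /ip; congr (Num.sqrt (_ * _)); apply: eq_bigr => i _.
      by rewrite /Dop; ring.
    by rewrite /ip -mulrN -sumrN; congr (_ * _); apply: eq_bigr => i _; rewrite mulrN.
have := ub_le_sup Hm1_set_ub Er; have := ub_le_sup Hm1_set_ub Enr.
lra.
Qed.

Lemma ip_le_Hm1 (u : int -> R) : Usharp N u -> ip N f u <= Hm1 N eps f * H1 N eps u.
Proof.
move=> u_sharp; have [H1u0|H1u_neq0] := eqVneq (H1 N eps u) 0.
  rewrite H1u0 mulr0; apply: le_trans (ler_norm _) _.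
  by apply: le_trans (ip_le_l1_H1 u) _; rewrite H1u0 mulr0.
have [->|u_neq0] := pselect (u = fun _ => 0).
  by rewrite /ip big1 ?mulr0 ?mulr_ge0 ?Hm1_ge0 ?H1_ge0 // => i _; rewrite mulr0.
have Eu : Eset (ip N f u / H1 N eps u) by exists u.
rewrite -{1}(divfK H1u_neq0 (ip N f u)) ler_wpM2r ?H1_ge0 //.
exact: (ub_le_sup Hm1_set_ub Eu).
Qed.

End DualNorm.

Section Mesh.
Variable R : realType.
Variables (N p : nat) (idx irep icoll : nat -> int) (K : nat).
Hypothesis hmesh : HQC_mesh N p idx irep icoll K.

Lemma idx_ge1 k : (k <= K)%N -> 1 <= idx k.
Proof.
case: hmesh => _ idx0 _ idx_lt _.
by elim: k => [|k IH] kK; rewrite ?idx0 //; have := idx_lt k kK; have := IH (ltnW kK); lia.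
Qed.

Lemma absz_idx k : (k <= K)%N -> `|idx k|%N = idx k :> int.
Proof. by move=> kK; rewrite gez0_abs // (le_trans _ (idx_ge1 kK)). Qed.

Lemma idx_le_idx a b : (a <= b)%N -> (b <= K)%N -> idx a <= idx b.
Proof.
case: hmesh => _ _ _ idx_lt _ ab; elim: b ab => [|b IH] ab bK.
  by rewrite leqn0 in ab; rewrite (eqP ab).
case: (leqP a b) => [/IH /(_ (ltnW bK)) | ba]; first by have := idx_lt b bK; lia.
by rewrite (_ : a = b.+1) //; apply/eqP; rewrite eqn_leq ab ba.
Qed.

Lemma block_of_index i : 1 <= i <= N%:Z ->
  exists2 k, (k < K)%N & idx k <= i < idx k.+1.
Proof.
case: hmesh => _ idx0 idxK _ _ hi.
suff block_from n : (n <= K)%N -> idx n <= i -> exists2 k, (k < K)%N & idx k <= i < idx k.+1.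
  by apply: (block_from 0%N); rewrite ?idx0 //; lia.
elim: {n}(K - n)%N {-2}n (erefl (K - n)%N) => [|d IH] n dn nK ni.
  by move: ni; rewrite (_ : n = K) ?idxK; [lia | apply/eqP; rewrite eqn_leq nK -subn_eq0 dn].
have nK' : (n < K)%N by rewrite -subn_gt0 dn.
case: (ltP i (idx n.+1)) => [i_lt | i_ge]; first by exists n => //; apply/andP.
by apply: (IH n.+1) => //; rewrite subnS dn.
Qed.

Lemma sum_blocks (F : nat -> R) :
  \sum_(1 <= i < N.+1) F i =
  \sum_(k < K) \sum_(`|idx k|%N <= i < `|idx k.+1|%N) F i.
Proof.
case: hmesh => _ idx0 idxK idx_lt _.
suff sum_upto n : (n <= K)%N -> \sum_(1 <= i < `|idx n|%N) F i =
    \sum_(k < n) \sum_(`|idx k|%N <= i < `|idx k.+1|%N) F i.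
  by rewrite -sum_upto // idxK.
elim: n => [|n IH] nK; first by rewrite big_ord0 idx0 big_geq.
rewrite big_ord_recr /= -IH ?(ltnW nK) //.
have idx_n := idx_ge1 (ltnW nK); have idx_n1 := idx_lt n nK.
rewrite (@big_cat_nat _ _ _ `|idx n|%N 1 `|idx n.+1|%N) // -lez_nat ?absz_idx ?(ltnW nK) //.
lia.
Qed.

Lemma Hk_ge0 (eps : R) k : 0 < eps -> (k < K)%N -> 0 <= Hk eps idx k.
Proof.
case: hmesh => _ _ _ idx_lt _ eps_gt0 kK.
by rewrite /Hk mulr_ge0 ?(ltW eps_gt0) // ler0z; have := idx_lt k kK; lia.
Qed.

End Mesh.

Lemma Hk_le_Hmax (R : realType) (eps : R) idx K k : (k < K)%N ->
  Hk eps idx k <= Hmax eps idx K.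
Proof. by move=> kK; apply/bigmax_geP; right; exists (Ordinal kK). Qed.

Lemma Hmax_ge0 (R : realType) (eps : R) idx K : 0 <= Hmax eps idx K.
Proof. exact: bigmax_ge_id. Qed.

Section PiecewiseAffine.
Variable R : realType.
Variables (N p : nat) (eps : R) (idx irep icoll : nat -> int) (K : nat).
Hypothesis N_gt0 : (0 < N)%N.
Hypothesis eps_gt0 : 0 < eps.
Hypothesis hNe : N%:R * eps = 1.
Hypothesis hmesh : HQC_mesh N p idx irep icoll K.

Lemma Dop_UHper_block v k i : UHper N eps idx K v -> (k < K)%N ->
  idx k <= i < idx k.+1 -> Dop eps v i = block_slope eps idx k v.
Proof.
case: hmesh => _ _ _ idx_lt _ [_ v_aff] kK hi.
have [a [b vE]] := v_aff k kK; have := idx_lt k kK => idx_k.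
rewrite /Dop /block_slope !vE; try by clear -hi idx_k; lia.
have : (idx k.+1 - idx k)%:~R != 0 :> R.
  by rewrite intr_eq0; apply/eqP; clear -idx_k; lia.
by rewrite !intrD ?intrN => ?; field; rewrite gt_eqF.
Qed.

Lemma H1_UHper_sqr v : UHper N eps idx K v ->
  H1 N eps v ^+ 2 = \sum_(k < K) Hk eps idx k * block_slope eps idx k v ^+ 2.
Proof.
move=> vH; rewrite H1_sqr /ip (sum_blocks hmesh) mulr_sumr.
have N_neq0 : N%:R != 0 :> R by rewrite pnatr_eq0 -lt0n.
have -> : N%:R^-1 = eps by rewrite -[RHS](mulKf N_neq0) hNe mulr1.
apply: eq_bigr => k _; have kK := ltn_ord k.
have [idx_k idx_k1] := (absz_idx hmesh (ltnW kK), absz_idx hmesh kK).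
have := idx_ge1 hmesh (ltnW kK); case: hmesh => _ _ _ /(_ k kK) idx_lt _ idx_k_ge1.
rewrite (eq_big_nat _ _ (F2 := fun _ => block_slope eps idx k v ^+ 2)); last first.
  move=> i hi; rewrite -expr2 (Dop_UHper_block vH kK) //.
  by rewrite -idx_k -idx_k1 !lez_nat ltz_nat.
rewrite sumr_const_nat /Hk -mulr_natl mulrA; congr (_ * _ * _).
by rewrite pmulrn -subzn ?idx_k ?idx_k1 // -lez_nat idx_k idx_k1 ltW.
Qed.

End PiecewiseAffine.

Section HQCEnergy.
Variable R : realType.
Variables (N p : nat) (eps : R) (psi chi : int -> int -> R) (c C : R).
Variables (idx irep icoll : nat -> int) (K : nat).
Hypothesis hcell : cell_solution N p psi chi.
Hypothesis hpsi : forall i j, c <= psi i j <= C.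
Hypothesis c_gt0 : 0 < c.
Hypothesis p_gt0 : (0 < p)%N.
Hypothesis N_gt0 : (0 < N)%N.
Hypothesis eps_gt0 : 0 < eps.
Hypothesis hNe : N%:R * eps = 1.
Hypothesis hmesh : HQC_mesh N p idx irep icoll K.

Lemma BHQC_diag v : BHQC p eps psi irep icoll idx K v v =
  \sum_(k < K) Hk eps idx k * (block_slope eps idx k v ^+ 2 * cell_flux psi chi (icoll k)).
Proof.
by apply: eq_bigr => k _; rewrite (local_energy _ _ _ _ _ hcell hpsi c_gt0 p_gt0 eps_gt0).
Qed.

Lemma BHQC_coercive v : UHper N eps idx K v ->
  c * H1 N eps v ^+ 2 <= BHQC p eps psi irep icoll idx K v v.
Proof.
move=> vH; rewrite (H1_UHper_sqr N_gt0 eps_gt0 hNe hmesh vH) BHQC_diag mulr_sumr.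
apply: ler_sum => k _.
rewrite mulrCA ler_wpM2l ?(Hk_ge0 hmesh) // mulrC ler_wpM2l ?sqr_ge0 //.
by case/andP: (cell_flux_bounds hcell hpsi c_gt0 p_gt0 (icoll k)).
Qed.

Lemma H1_HQC_solution_le f uH : mean N f = 0 ->
  HQC_solution N p eps psi irep icoll idx K f uH -> H1 N eps uH <= Hm1 N eps f / c.
Proof.
move=> f_mean0 [[uH_per uH_sharp] uH_eq].
have energy : c * H1 N eps uH ^+ 2 <= Hm1 N eps f * H1 N eps uH.
  apply: le_trans (BHQC_coercive uH_per) _; rewrite uH_eq; last by split.
  exact: ip_le_Hm1.
have U_ge0 := H1_ge0 N eps uH; rewrite ler_pdivlMr //.
have [->|U_neq0] := eqVneq (H1 N eps uH) 0; first by rewrite mul0r Hm1_ge0.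
have U_gt0 : 0 < H1 N eps uH by rewrite lt_neqAle eq_sym U_neq0.
by rewrite -(ler_pM2r U_gt0) mulrAC -expr2 mulrC.
Qed.

End HQCEnergy.

Section PointwiseBounds.
Variable R : realType.

Lemma sqr_le_of_norm_le (x y : R) : `|x| <= y -> x ^+ 2 <= y ^+ 2.
Proof.
move=> xy; have y_ge0 := le_trans (normr_ge0 x) xy.
by rewrite -real_normK ?num_real // ler_sqr ?nnegrE.
Qed.

Lemma sqrtr_le_of_le_sqr (x y : R) : 0 <= y -> x <= y ^+ 2 -> Num.sqrt x <= y.
Proof.
by move=> y_ge0 xy; apply: le_trans (ler_wsqrtr xy) _; rewrite sqrtr_sqr ger0_norm.
Qed.

Lemma sum_shift_periodic (N : nat) (g : int -> R) : periodic N g ->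
  \sum_(1 <= i < N.+1) g (i%:Z + 1) = \sum_(1 <= i < N.+1) g i%:Z.
Proof.
case: N => [|N] hg; first by rewrite !big_geq.
rewrite [LHS]big_nat_recr // [RHS]big_nat_recl //= addrC.
rewrite (_ : N.+1%:Z + 1 = 1 + N.+1%:Z) ?hg; last by rewrite addrC.
by congr (_ + _); apply: eq_bigr => i _; rewrite -addn1 PoszD.
Qed.

Variables (N : nat) (eps : R).

Lemma L2_le_pointwise (d g : int -> R) (a : R) : 0 <= a ->
  (forall i : nat, (1 <= i < N.+1)%N -> `|d i%:Z| <= a * `|g i%:Z|) ->
  L2 N d <= a * L2 N g.
Proof.
move=> a_ge0 dg; rewrite /L2; apply: sqrtr_le_of_le_sqr; first by rewrite mulr_ge0 ?sqrtr_ge0.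
rewrite exprMn sqr_sqrtr ?ip_ge0 // /ip mulrCA ler_wpM2l ?invr_ge0 ?ler0n //.
rewrite mulr_sumr; apply: ler_sum_nat => i hi.
rewrite -!expr2 -exprMn -[X in _ <= X]real_normK ?num_real // normrM (ger0_norm a_ge0).
exact/sqr_le_of_norm_le/dg.
Qed.

Lemma H1_le_pointwise (d g : int -> R) (b : R) : 0 < eps -> 0 <= b -> periodic N g ->
  (forall i : nat, (1 <= i <= N.+1)%N -> `|d i%:Z| <= eps * b * `|g i%:Z|) ->
  H1 N eps d <= 2 * b * L2 N g.
Proof.
move=> eps_gt0 b_ge0 g_per dg.
have Dd_le i : (1 <= i < N.+1)%N ->
    Dop eps d i%:Z ^+ 2 <= 2 * b ^+ 2 * (g (i%:Z + 1) ^+ 2 + g i%:Z ^+ 2).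
  move=> /andP [i1 iN].
  have : `|Dop eps d i%:Z| <= b * (`|g (i%:Z + 1)| + `|g i%:Z|).
    rewrite /Dop normrM normfV (gtr0_norm eps_gt0) ler_pdivrMr //.
    apply: le_trans (ler_normB _ _) _; rewrite [_ * eps]mulrC mulrA mulrDr.
    apply: lerD; last by apply: dg; rewrite i1 ltnW.
    by rewrite -PoszD addn1; apply: dg; rewrite ltnS ltnW.
  move/sqr_le_of_norm_le/le_trans; apply.
  rewrite -[g (i%:Z + 1) ^+ 2]real_normK ?num_real // -[g i%:Z ^+ 2]real_normK ?num_real //.
  set x := `|g _|; set y := `|g _|.
  have := sqr_ge0 (x - y); have := sqr_ge0 b; rewrite !expr2; nra.
rewrite /H1 /L2; apply: sqrtr_le_of_le_sqr; first by rewrite !mulr_ge0 ?sqrtr_ge0.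
rewrite /ip; under eq_bigr do rewrite -expr2.
apply: le_trans (ler_wpM2l _ (ler_sum_nat Dd_le)) _; first by rewrite invr_ge0 ler0n.
rewrite -mulr_sumr big_split /= (sum_shift_periodic (g := fun i => g i ^+ 2)); last first.
  by move=> i; rewrite g_per.
rewrite !exprMn sqr_sqrtr ?ip_ge0 // /ip.
under [X in _ <= _ * (_ * X)]eq_bigr do rewrite -expr2.
by rewrite le_eqVlt; apply/orP; left; apply/eqP; ring.
Qed.

End PointwiseBounds.

Section ReconstructionError.
Variable R : realType.
Variables (N p : nat) (eps : R) (psi chi : int -> int -> R) (c C C' : R).
Variables (idx irep icoll : nat -> int) (K : nat) (uH uHc : int -> R).
Hypothesis hcell : cell_solution N p psi chi.
Hypothesis hpsi : forall i j, c <= psi i j <= C.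
Hypothesis c_gt0 : 0 < c.
Hypothesis p_gt0 : (0 < p)%N.
Hypothesis N_gt0 : (0 < N)%N.
Hypothesis eps_gt0 : 0 < eps.
Hypothesis psi_two_scale : two_scale N p psi.
Hypothesis hDX : forall i j : int, 1 <= i <= N%:Z -> 1 <= j <= p%:Z ->
  `|DX eps psi i j| <= C'.
Hypothesis hmesh : HQC_mesh N p idx irep icoll K.
Hypothesis uH_per : UHper N eps idx K uH.
Hypothesis huHc : reconstruction N p eps psi irep icoll idx K uH uHc.

Let L := p%:R * (C' * cell_lip c C).

Lemma L_ge0 : 0 <= L.
Proof. by rewrite mulr_ge0 ?ler0n ?mulr_ge0 ?(C'_ge0 p_gt0 N_gt0 hDX) ?(cell_lip_ge0 hpsi). Qed.

Lemma chi_diff_block_le k i : (k < K)%N -> idx k <= i < idx k.+1 ->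
  `|chi i i - chi (icoll k) i| <= Hk eps idx k * L.
Proof.
move=> kK hi; case: hmesh => _ _ _ _ /(_ k kK) [[rep_lo rep_hi] /andP [coll_lo coll_hi]].
have idx_k := idx_ge1 hmesh (ltnW kK).
have idx_k1 : idx k.+1 <= N.+1%:Z by case: hmesh => _ _ <- _ _; apply: (idx_le_idx hmesh kK).
suff dist_le a b : idx k <= a -> a <= b -> b < idx k.+1 ->
    `|chi b i - chi a i| <= Hk eps idx k * L.
  by case: (lerP (icoll k) i) => ci; [| rewrite distrC]; apply: dist_le; lia.
move=> ka ab bk.
have chi_lip := chi_lipschitz hcell hpsi c_gt0 p_gt0 eps_gt0 psi_two_scale hDX i _ ab.
apply: le_trans (chi_lip _ _) _; try lia.
rewrite (_ : _ * (p%:R * _) = (eps * (b - a)%:~R) * L); last by rewrite /L; ring.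
by rewrite ler_wpM2r ?L_ge0 // /Hk ler_wpM2l ?(ltW eps_gt0) // ler_int; lia.
Qed.

Lemma uhat_sub_reconstruction_block k i : (k < K)%N -> idx k <= i < idx k.+1 ->
  uhat eps chi uH i - uHc i =
  eps * block_slope eps idx k uH * (chi i i - chi (icoll k) i).
Proof.
move=> kK hi; case: huHc => _ /(_ k kK i hi) ->.
rewrite (wcorr_corrector _ _ _ _ _ hcell hpsi c_gt0 p_gt0 eps_gt0).
rewrite /uhat /cell_corrector (Dop_UHper_block eps_gt0 hmesh uH_per kK hi); ring.
Qed.

Lemma uhat_sub_reconstruction_periodic (p_dvd_N : (p %| N)%N) :
  periodic N (fun i => uhat eps chi uH i - uHc i).
Proof.
have uH_p : periodic N uH by case: uH_per.
have chi_N x j : chi x (j + N%:Z) = chi x j.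
  rewrite -(divnK p_dvd_N) PoszM periodicMz // => j'.
  exact: (chi_periodic hcell).
move=> i; rewrite /uhat /Dop [i + N%:Z + 1]addrAC !uH_p chi_N.
by case: hcell => /(_ i i) [-> _]; case: huHc => ->.
Qed.

Lemma reconstruction_error_le (p_dvd_N : (p %| N)%N) i : 1 <= i <= N.+1%:Z ->
  `|uhat eps chi uH i - uHc i| <= eps * (L * Hmax eps idx K) * `|Dop eps uH i|.
Proof.
wlog iN : i / i <= N%:Z => [hwlog hi|hi].
  case: (lerP i N%:Z) => [iN | Ni]; first exact: hwlog.
  have -> : i = 1 + N%:Z by lia.
  have Du_p := Dop_periodic eps uH_per.1.
  by rewrite (uhat_sub_reconstruction_periodic p_dvd_N) Du_p; apply: hwlog; lia.
have [k kK hik] := block_of_index hmesh (ltac:(lia) : 1 <= i <= N%:Z).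
rewrite (uhat_sub_reconstruction_block kK hik) (Dop_UHper_block eps_gt0 hmesh uH_per kK hik).
rewrite 2!normrM (gtr0_norm eps_gt0) mulrAC ler_wpM2r // ler_wpM2l ?(ltW eps_gt0) //.
apply: le_trans (chi_diff_block_le kK hik) _.
by rewrite mulrC ler_wpM2l ?L_ge0 ?Hk_le_Hmax.
Qed.

End ReconstructionError.

Theorem lemma6p10 (R : realType) (c_psi C_psi C'_psi : R) (p : nat) :
  0 < c_psi -> (0 < p)%N ->
  exists C13 C14 : R,
  forall (N : nat) (eps : R) (psi chi : int -> int -> R) (f : int -> R)
         (K : nat) (idx irep icoll : nat -> int) (uH uHc : int -> R),
    (0 < N)%N -> (p %| N)%N -> 0 < eps -> N%:R * eps = 1 ->
    two_scale N p psi ->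
    (forall i j : int, c_psi <= psi i j <= C_psi) ->
    (forall i j : int, 1 <= i <= N%:Z -> 1 <= j <= p%:Z ->
        `|DX eps psi i j| <= C'_psi) ->
    cell_solution N p psi chi ->
    Uper N f -> mean N f = 0 ->
    HQC_mesh N p idx irep icoll K ->
    HQC_solution N p eps psi irep icoll idx K f uH ->
    reconstruction N p eps psi irep icoll idx K uH uHc ->
    H1 N eps (fun i => uhat eps chi uH i - uHc i)
      <= C13 * Hmax eps idx K * Hm1 N eps f /\
    L2 N (fun i => uhat eps chi uH i - uHc i)
      <= C14 * eps * Hmax eps idx K * Hm1 N eps f.
Proof.
move=> c_gt0 p_gt0; set L := p%:R * (C'_psi * cell_lip c_psi C_psi).
exists (2 * L / c_psi), (L / c_psi).
move=> N eps psi chi f K idx irep icoll uH uHc N_gt0 p_dvd_N eps_gt0 hNe psi_two_scale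
  hpsi hDX hcell _ f_mean0 hmesh hsol huHc.
have uH_per : UHper N eps idx K uH by case: hsol => [[]].
have U_le := H1_HQC_solution_le hcell hpsi c_gt0 p_gt0 N_gt0 eps_gt0 hNe hmesh f_mean0 hsol.
have err_le := reconstruction_error_le hcell hpsi c_gt0 p_gt0 N_gt0 eps_gt0
  psi_two_scale hDX hmesh uH_per huHc p_dvd_N.
have LH_ge0 : 0 <= L * Hmax eps idx K.
  by rewrite mulr_ge0 ?Hmax_ge0 ?(L_ge0 hpsi c_gt0 p_gt0 N_gt0 hDX).
set H := Hmax eps idx K.
split.
- apply: le_trans (H1_le_pointwise eps_gt0 LH_ge0 (Dop_periodic eps uH_per.1) _) _.
    by move=> i hi; apply: err_le; lia.
  rewrite (_ : 2 * L / c_psi * H * Hm1 N eps f = 2 * (L * H) * (Hm1 N eps f / c_psi)).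
    by apply: ler_wpM2l U_le; apply: mulr_ge0.
  by rewrite /L; ring.
- apply: le_trans (L2_le_pointwise (mulr_ge0 (ltW eps_gt0) LH_ge0) _) _.
    by move=> i hi; apply: err_le; lia.
  rewrite (_ : L / c_psi * eps * H * Hm1 N eps f = eps * (L * H) * (Hm1 N eps f / c_psi)).
    by apply: ler_wpM2l U_le; apply: mulr_ge0 => //; apply: ltW.
  by rewrite /L; ring.
Qed.
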